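(* Let $0\leq\epsilon<\frac{\pi}{4}$ and let $Q_\epsilon$ be the hyperbolic quadrilateral with all four sides of equal length and consecutive interior angles $\frac{\pi}{4}-\epsilon,\ \frac{\pi}{4}+\epsilon,\ \frac{\pi}{4}-\epsilon,\ \frac{\pi}{4}+\epsilon$. Then for each pair of opposite sides of $Q_\epsilon$, the common perpendicular between them passes through the intersection point of the two diagonals of $Q_\epsilon$, and both common perpendiculars have the same length $d$, where $\cosh d=\sqrt{2}\cos\epsilon+1$.
   Context: Work in the hyperbolic plane $\mathbb{H}^2$ (curvature $-1$). Such a quadrilateral $Q_\epsilon$ exists and is unique up to isometry. *)

(* hyperboloid model of the hyperbolic plane H^2 (curvature -1). *)
From Stdlib Require Import Reals.
Open Scope R_scope.

Record vec3 : Type := V3 { c0 : R; c1 : R; c2 : R }.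

Definition mink (x y : vec3) : R := - c0 x * c0 y + c1 x * c1 y + c2 x * c2 y.

Definition vadd (x y : vec3) : vec3 := V3 (c0 x + c0 y) (c1 x + c1 y) (c2 x + c2 y).
Definition vscale (a : R) (x : vec3) : vec3 := V3 (a * c0 x) (a * c1 x) (a * c2 x).

Definition det3 (x y z : vec3) : R :=
  c0 x * (c1 y * c2 z - c2 y * c1 z)
  - c1 x * (c0 y * c2 z - c2 y * c0 z)
  + c2 x * (c0 y * c1 z - c1 y * c0 z).

Definition inH (x : vec3) : Prop := mink x x = -1 /\ 0 < c0 x.

Definition arcosh (t : R) : R := ln (t + sqrt (t * t - 1)).
Definition hdist (x y : vec3) : R := arcosh (- mink x y).

(* Tangent vector at P pointing towards Q (projection of Q to T_P H). *)
Definition tang (P Q : vec3) : vec3 := vadd Q (vscale (mink Q P) P).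

Definition hangle (Q P S : vec3) : R :=
  let u := tang P Q in let w := tang P S in
  acos (mink u w / (sqrt (mink u u) * sqrt (mink w w))).

(* X lies on the geodesic line through A and B (A <> B): X in span(A,B). *)
Definition on_line (X A B : vec3) : Prop := det3 A B X = 0.

Definition on_seg (X A B : vec3) : Prop :=
  exists s t : R, 0 <= s /\ 0 <= t /\ X = vadd (vscale s A) (vscale t B).

Definition perp_at (P Q R S : vec3) : Prop :=
  mink (tang P Q) (tang P R) = 0 /\ mink (tang P Q) (tang P S) = 0.

Definition common_perp (P Q A B C D : vec3) : Prop :=
  inH P /\ inH Q /\ P <> Q /\ on_line P A B /\ on_line Q C D /\
  perp_at P Q A B /\ perp_at Q P C D.

(* ABCD (vertices in this cyclic order) is a convex quadrilateral:
   for each side, the two other vertices lie strictly on the same side of its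
   line, and all sides induce the same orientation. *)
Definition convex_quad (A B C D : vec3) : Prop :=
  (0 < det3 A B C /\ 0 < det3 A B D /\ 0 < det3 B C D /\ 0 < det3 B C A /\
   0 < det3 C D A /\ 0 < det3 C D B /\ 0 < det3 D A B /\ 0 < det3 D A C) \/
  (det3 A B C < 0 /\ det3 A B D < 0 /\ det3 B C D < 0 /\ det3 B C A < 0 /\
   det3 C D A < 0 /\ det3 C D B < 0 /\ det3 D A B < 0 /\ det3 D A C < 0).

(* In the hyperboloid model let a = cosh of the common side length, p = cosh AC and
   q = cosh BD. The law of cosines in the isosceles triangles DAB and ABC gives
   (a^2 - 1) cos A = a^2 - q and (a^2 - 1) cos B = a^2 - p. Writing D in the basis A, B, C
   and pairing with A, B, C, D shows (1 + p)(1 + q) = 4 a^2 and that B + D is a multiple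
   of A + C, so the diagonals meet at the centre O, a multiple of A + C. The poles M1, M2
   of the opposite sides AB, CD have equal norms and M1 + M2 is again a multiple of A + C.
   For a common perpendicular PQ, tang P Q and tang Q P are multiples of M1 and M2, so
   P + Q is a multiple of M1 + M2 (O lies on PQ) and
   cosh PQ = - <M1,M2> / <M1,M1> = (pq - a^2) / (a^2 - 1) = 1 + cos A + cos B,
   which is 1 + sqrt 2 cos eps. The other pair of sides is the rhombus BCDA. *)

From Stdlib Require Import Reals Lra.
Open Scope R_scope.

Lemma vec3_ext x y : c0 x = c0 y -> c1 x = c1 y -> c2 x = c2 y -> x = y.
Proof. destruct x, y; simpl; intros; subst; reflexivity. Qed.

Lemma vec3_coords x y : x = y -> c0 x = c0 y /\ c1 x = c1 y /\ c2 x = c2 y.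
Proof. intros ->; auto. Qed.

Ltac vec3_eq := apply vec3_ext; cbn [c0 c1 c2 vadd vscale].

Lemma mink_sym x y : mink x y = mink y x.
Proof. unfold mink; ring. Qed.

Lemma mink_vaddl x y z : mink (vadd x y) z = mink x z + mink y z.
Proof. unfold mink, vadd; simpl; ring. Qed.

Lemma mink_vaddr x y z : mink z (vadd x y) = mink z x + mink z y.
Proof. unfold mink, vadd; simpl; ring. Qed.

Lemma mink_vscalel s x z : mink (vscale s x) z = s * mink x z.
Proof. unfold mink, vscale; simpl; ring. Qed.

Lemma mink_vscaler s x z : mink z (vscale s x) = s * mink z x.
Proof. unfold mink, vscale; simpl; ring. Qed.

Ltac mink_expand :=
  repeat first [rewrite mink_vaddl | rewrite mink_vaddr
               | rewrite mink_vscalel | rewrite mink_vscaler].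

Lemma mink_tang P Q X : mink (tang P Q) X = mink Q X + mink Q P * mink P X.
Proof. unfold tang; mink_expand; ring. Qed.

Lemma mink_tang_tang X Y Z : inH Y ->
  mink (tang Y X) (tang Y Z) = mink X Z + mink X Y * mink Y Z.
Proof.
  intros [HY _]; unfold tang; mink_expand.
  rewrite HY, (mink_sym Z Y); ring.
Qed.

Lemma perp_atE P Q A B : inH P ->
  perp_at P Q A B <-> mink (tang P Q) A = 0 /\ mink (tang P Q) B = 0.
Proof.
  intros HP; unfold perp_at; rewrite !mink_tang_tang, !mink_tang, (mink_sym Q P) by exact HP.
  tauto.
Qed.

Lemma vadd_tang P Q :
  vadd (tang P Q) (tang Q P) = vscale (1 + mink P Q) (vadd P Q).
Proof. unfold tang; rewrite (mink_sym Q P); vec3_eq; ring. Qed.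

Lemma det3_lin X Y Z al be ga :
  det3 (vadd (vadd (vscale al X) (vscale be Y)) (vscale ga Z)) Y Z = al * det3 X Y Z /\
  det3 X (vadd (vadd (vscale al X) (vscale be Y)) (vscale ga Z)) Z = be * det3 X Y Z /\
  det3 X Y (vadd (vadd (vscale al X) (vscale be Y)) (vscale ga Z)) = ga * det3 X Y Z.
Proof. destruct X, Y, Z; unfold det3; simpl; repeat split; ring. Qed.

Lemma lin_indep3 X Y Z al be ga : det3 X Y Z <> 0 ->
  vadd (vadd (vscale al X) (vscale be Y)) (vscale ga Z) = V3 0 0 0 ->
  al = 0 /\ be = 0 /\ ga = 0.
Proof.
  intros Hd E; destruct (det3_lin X Y Z al be ga) as (E1 & E2 & E3).
  rewrite E in E1, E2, E3; unfold det3 at 1 in E1; unfold det3 at 1 in E2;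
    unfold det3 at 1 in E3; simpl in E1, E2, E3.
  repeat split; apply (Rmult_eq_reg_r (det3 X Y Z)); lra.
Qed.

Lemma cramer X Y Z V :
  vscale (det3 X Y Z) V =
  vadd (vadd (vscale (det3 V Y Z) X) (vscale (det3 X V Z) Y)) (vscale (det3 X Y V) Z).
Proof. destruct X, Y, Z, V; unfold det3; vec3_eq; ring. Qed.

(* The hypotheses say that a combination of the columns of the matrix with rows
   X, Y, Z vanishes, and transposing does not change [det3]. *)
Lemma mink_basis_inj X Y Z v w : det3 X Y Z <> 0 ->
  mink v X = mink w X -> mink v Y = mink w Y -> mink v Z = mink w Z -> v = w.
Proof.
  intros Hd EX EY EZ.
  set (col f := V3 (f X) (f Y) (f Z)).
  assert (Hdt : det3 (col c0) (col c1) (col c2) <> 0)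
    by (unfold col, det3 in *; simpl; contradict Hd; rewrite <- Hd; ring).
  destruct (lin_indep3 _ _ _ (c0 w - c0 v) (c1 v - c1 w) (c2 v - c2 w) Hdt)
    as (E0 & E1 & E2).
  - unfold col, mink in *; vec3_eq; lra.
  - apply vec3_ext; lra.
Qed.

Lemma on_line_span A B C P : det3 A B C <> 0 -> on_line P A B ->
  exists x y, P = vadd (vscale x A) (vscale y B).
Proof.
  intros Hd HP; pose proof (cramer A B C P) as E; unfold on_line in HP; rewrite HP in E.
  set (d := det3 A B C) in *; exists (det3 P B C / d), (det3 A P C / d).
  destruct (vec3_coords _ _ E) as (E0 & E1 & E2); simpl in E0, E1, E2.
  vec3_eq; apply (Rmult_eq_reg_l d); try exact Hd;
    [rewrite E0 | rewrite E1 | rewrite E2]; field; exact Hd.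
Qed.

Lemma on_line_comb A B x y : on_line (vadd (vscale x A) (vscale y B)) A B.
Proof. destruct A, B; unfold on_line, det3; simpl; ring. Qed.

Lemma mink_on_line A B C P m : det3 A B C <> 0 -> on_line P A B ->
  mink m A = 0 -> mink m B = 0 -> mink P m = 0.
Proof.
  intros Hd HP HA HB; destruct (on_line_span A B C P Hd HP) as (x & y & ->).
  mink_expand; rewrite (mink_sym A m), (mink_sym B m), HA, HB; ring.
Qed.

Lemma mink_inH_le x y : inH x -> inH y -> mink x y <= -1.
Proof.
  destruct x as [x0 x1 x2], y as [y0 y1 y2]; unfold inH, mink; simpl.
  intros [Hx Hx0] [Hy Hy0].
  assert (L : (x0*y0)^2 - (1 + x1*y1 + x2*y2)^2 =
              (x1-y1)^2 + (x2-y2)^2 + (x1*y2-x2*y1)^2).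
  { replace ((x0*y0)^2) with ((x0*x0)*(y0*y0)) by ring.
    replace (x0*x0) with (1 + x1*x1 + x2*x2) by lra.
    replace (y0*y0) with (1 + y1*y1 + y2*y2) by lra. ring. }
  assert (0 < x0*y0) by nra.
  destruct (Rle_dec (1 + x1*y1 + x2*y2) 0); [nra|].
  assert (0 <= (x0*y0)^2 - (1 + x1*y1 + x2*y2)^2)
    by (rewrite L; repeat apply Rplus_le_le_0_compat; apply pow2_ge_0).
  nra.
Qed.

Lemma cosh_arcosh t : 1 <= t -> cosh (arcosh t) = t.
Proof.
  intros Ht; unfold arcosh, cosh.
  set (s := sqrt (t*t - 1)).
  assert (Hs : s*s = t*t - 1) by (apply sqrt_sqrt; nra).
  assert (0 <= s) by apply sqrt_pos.
  rewrite exp_Ropp, exp_ln by lra.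
  replace (/ (t + s)) with (t - s); [lra|].
  field_simplify_eq; nra.
Qed.

Lemma cosh_hdist x y : inH x -> inH y -> cosh (hdist x y) = - mink x y.
Proof.
  intros Hx Hy; apply cosh_arcosh; pose proof (mink_inH_le x y Hx Hy); lra.
Qed.

Lemma hdist_eq_mink x y z w : inH x -> inH y -> inH z -> inH w ->
  hdist x y = hdist z w -> mink x y = mink z w.
Proof.
  intros Hx Hy Hz Hw E; apply (f_equal cosh) in E.
  rewrite !cosh_hdist in E by assumption; lra.
Qed.

Lemma cos_acos_interior x th : 0 < th < PI -> acos x = th -> cos th = x.
Proof.
  intros Hth E.
  assert (-1 < x < 1).
  { unfold acos in E; destruct (Rle_dec x (-1)); [lra|]; destruct (Rle_dec 1 x); lra. }
  rewrite <- E; apply cos_acos; lra.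
Qed.

Lemma cos_hangle X Y Z th : inH X -> inH Y -> inH Z ->
  0 < th < PI -> hangle X Y Z = th ->
  cos th = (mink X Z + mink X Y * mink Y Z) /
           (sqrt (mink X Y * mink X Y - 1) * sqrt (mink Y Z * mink Y Z - 1)).
Proof.
  intros HX HY HZ Hth E; apply cos_acos_interior in E; [|exact Hth].
  rewrite E, !mink_tang_tang, (proj1 HX), (proj1 HZ), (mink_sym Y X), (mink_sym Z Y) by exact HY.
  f_equal; f_equal; f_equal; ring.
Qed.

Lemma cos_hangle_isosceles X Y Z a r th : inH X -> inH Y -> inH Z ->
  mink X Y = -a -> mink Y Z = -a -> mink X Z = -r ->
  0 < th < PI / 2 -> hangle X Y Z = th ->
  1 < a * a /\ 1 < r /\ cos th * (a * a - 1) = a * a - r.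
Proof.
  intros HX HY HZ hXY hYZ hXZ Hth E.
  pose proof PI_RGT_0; pose proof (mink_inH_le X Y HX HY).
  apply cos_hangle in E; [|assumption..|lra].
  rewrite hXY, hYZ, hXZ, sqrt_def in E by nra.
  assert (0 < cos th) by (apply cos_gt_0; lra).
  assert (cos th < 1) by (rewrite <- cos_0; apply cos_decreasing_1; lra).
  assert (Ha : 1 < a * a).
  { destruct (Req_dec (a * a - 1) 0) as [E0|E0]; [|nra].
    replace (- a * - a - 1) with (a * a - 1) in E by ring.
    rewrite E0, Rdiv_0_r in E; lra. }
  assert (Er : cos th * (a * a - 1) = a * a - r) by (rewrite E; field; lra).
  split; [exact Ha|]; split; [nra | exact Er].
Qed.

Lemma inv_sqrt_sqr r : 0 < r -> / sqrt r * / sqrt r = / r.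
Proof. intros Hr; rewrite <- Rinv_mult, sqrt_sqrt; lra. Qed.

Definition hnormalize (v : vec3) : vec3 := vscale (/ sqrt (- mink v v)) v.

Lemma hnormalize_inH v : mink v v < 0 -> 0 < c0 v -> inH (hnormalize v).
Proof.
  intros Hv Hv0; split; unfold hnormalize.
  - mink_expand; rewrite <- Rmult_assoc, inv_sqrt_sqr by lra; field; lra.
  - simpl; apply Rmult_lt_0_compat; [|exact Hv0].
    apply Rinv_0_lt_compat, sqrt_lt_R0; lra.
Qed.

Lemma mink_hnormalize v w : mink v v < 0 -> mink w w = mink v v ->
  mink (hnormalize v) (hnormalize w) = mink v w / - mink v v.
Proof.
  intros Hv Hw; unfold hnormalize; mink_expand; rewrite Hw.
  rewrite <- Rmult_assoc, inv_sqrt_sqr by lra.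
  field; lra.
Qed.

Lemma on_line_hnormalize v A B : on_line v A B -> on_line (hnormalize v) A B.
Proof.
  unfold on_line, hnormalize; intros E.
  replace (det3 A B _) with (/ sqrt (- mink v v) * det3 A B v)
    by (destruct A, B, v; unfold det3; simpl; ring).
  rewrite E; ring.
Qed.

Lemma hnormalize_perp_at v w A B : mink v v < 0 -> 0 < c0 v -> mink w w < 0 ->
  mink w v * mink v A = mink v v * mink w A ->
  mink w v * mink v B = mink v v * mink w B ->
  perp_at (hnormalize v) (hnormalize w) A B.
Proof.
  intros Hv Hv0 Hw EA EB; apply perp_atE; [exact (hnormalize_inH v Hv Hv0)|].
  unfold hnormalize; rewrite !mink_tang; mink_expand.
  pose proof (inv_sqrt_sqr (- mink v v) ltac:(lra)) as Hs.
  set (s := / sqrt (- mink v v)) in *; set (t := / sqrt (- mink w w)).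
  assert (K : forall X, mink w v * mink v X = mink v v * mink w X ->
    t * mink w X + t * (s * mink w v) * (s * mink v X) = 0).
  { intros X EX; transitivity (t * (mink w X + (s * s) * (mink w v * mink v X))); [ring|].
    rewrite Hs, EX; field; lra. }
  split; apply K; assumption.
Qed.

Lemma perp_at_pole P Q A B C m : inH P -> perp_at P Q A B -> det3 A B C <> 0 ->
  mink m A = 0 -> mink m B = 0 -> mink m C <> 0 ->
  exists l, tang P Q = vscale l m.
Proof.
  intros HP Hperp Hd mA mB mC; apply (perp_atE P Q A B HP) in Hperp as [tA tB].
  exists (mink (tang P Q) C / mink m C).
  apply (mink_basis_inj A B C); [exact Hd| | |]; rewrite mink_vscalel.
  - rewrite tA, mA; ring.
  - rewrite tB, mB; ring.
  - field; exact mC.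
Qed.

(* Pairing [tang P Q] and [tang Q P] with the poles gives
   l2 <m1,m2> = <P,Q> l1 k and l1 <m1,m2> = <P,Q> l2 k; since <m1,m2> < 0 < k and
   <P,Q> <= -1, this forces l2 = l1. *)
Lemma common_perp_poles P Q m1 m2 l1 l2 k : inH P -> inH Q -> P <> Q ->
  tang P Q = vscale l1 m1 -> tang Q P = vscale l2 m2 ->
  mink P m1 = 0 -> mink Q m2 = 0 ->
  mink m1 m1 = k -> mink m2 m2 = k -> 0 < k -> mink m1 m2 < 0 ->
  l2 = l1 /\ mink P Q * k = mink m1 m2.
Proof.
  intros HP HQ HPQ E1 E2 Pm1 Qm2 k1 k2 Hk Hh.
  pose proof (mink_inH_le P Q HP HQ) as Hg.
  assert (S1 : l2 * mink m1 m2 = mink P Q * (l1 * k)).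
  { rewrite (mink_sym m1 m2), <- k1, <- (mink_vscalel l2 m2 m1), <- (mink_vscalel l1 m1 m1).
    rewrite <- E1, <- E2, !mink_tang, Pm1, (mink_sym Q P); ring. }
  assert (S2 : l1 * mink m1 m2 = mink P Q * (l2 * k)).
  { rewrite <- k2, <- (mink_vscalel l1 m1 m2), <- (mink_vscalel l2 m2 m2).
    rewrite <- E1, <- E2, !mink_tang, Qm2, (mink_sym Q P); ring. }
  assert (Hl1 : l1 <> 0).
  { intros ->; apply HPQ.
    assert (EQ : Q = vscale (- mink P Q) P).
    { destruct (vec3_coords _ _ E1) as (F0 & F1 & F2); unfold tang in F0, F1, F2.
      rewrite (mink_sym Q P) in F0, F1, F2; simpl in F0, F1, F2; vec3_eq; lra. }
    assert (Hg1 : mink P Q = -1).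
    { pose proof (proj1 HQ) as QQ; rewrite EQ in QQ at 1 2.
      rewrite mink_vscalel, mink_vscaler, (proj1 HP) in QQ; nra. }
    rewrite EQ, Hg1; vec3_eq; ring. }
  assert (Hl : l2 = l1).
  { assert (Sq : (l1 - l2) * (l1 + l2) * mink m1 m2 = 0).
    { transitivity (l1 * (l1 * mink m1 m2) - l2 * (l2 * mink m1 m2)); [ring|].
      rewrite S1, S2; ring. }
    apply Rmult_integral in Sq as [Sq|Sq]; [|lra].
    apply Rmult_integral in Sq as [Sq|Sq]; [lra|].
    exfalso; assert (l2 = - l1) by lra; subst l2.
    assert (mink m1 m2 = - mink P Q * k) by (apply (Rmult_eq_reg_l l1); [lra | exact Hl1]).
    nra. }
  subst l2; split; [reflexivity|].
  apply (Rmult_eq_reg_l l1); [nra | exact Hl1].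
Qed.

Lemma on_seg_sym X A C : on_seg X A C -> on_seg X C A.
Proof.
  intros (s & t & Hs & Ht & ->); exists t, s; repeat split; try assumption.
  vec3_eq; ring.
Qed.

Lemma on_seg_diagonals A B C D X k : det3 A B C <> 0 ->
  vadd B D = vscale k (vadd A C) -> on_seg X A C -> on_seg X B D ->
  exists s, 0 <= s /\ X = vscale s (vadd A C).
Proof.
  intros Hd HBD (s1 & t1 & Hs1 & _ & EX1) (s2 & t2 & _ & _ & EX2).
  destruct (lin_indep3 A B C (s1 - t2 * k) (t2 - s2) (t1 - t2 * k) Hd) as (E1 & _ & E3).
  - destruct (vec3_coords _ _ HBD) as (F0 & F1 & F2).
    rewrite EX1 in EX2; destruct (vec3_coords _ _ EX2) as (G0 & G1 & G2).
    simpl in *; vec3_eq; nra.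
  - exists s1; split; [exact Hs1|]; rewrite EX1; vec3_eq; nra.
Qed.

Lemma on_seg_of_vadd X P Q W s t : 0 <= s -> 0 < t ->
  X = vscale s W -> vadd P Q = vscale t W -> on_seg X P Q.
Proof.
  intros Hs Ht -> EPQ; exists (s / t), (s / t).
  assert (0 <= s / t) by (apply Rmult_le_pos; [lra | apply Rlt_le, Rinv_0_lt_compat, Ht]).
  repeat split; try assumption.
  destruct (vec3_coords _ _ EPQ) as (F0 & F1 & F2); simpl in F0, F1, F2.
  vec3_eq; field_simplify_eq; try lra; nra.
Qed.

Lemma vscale_c0_pos t v w : 0 < c0 v -> 0 < c0 w -> v = vscale t w -> 0 < t.
Proof. intros Hv Hw ->; simpl in Hv; nra. Qed.

Ltac gram :=
  repeat match goal with
  | H : inH ?x |- context [mink ?x ?x] => rewrite (proj1 H)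
  | H : mink ?x ?y = _ |- context [mink ?x ?y] => rewrite H
  | H : mink ?x ?y = _ |- context [mink ?y ?x] => rewrite (mink_sym y x), H
  end.

(* The pole of the line XY when <X,Y> = <Y,Z> = -a and <X,Z> = -p
   (Minkowski-orthogonal to X and Y). *)
Definition side_pole (a p : R) (X Y Z : vec3) : vec3 :=
  vadd (vadd (vscale (a * a - p) X) (vscale (a * (p - 1)) Y)) (vscale (1 - a * a) Z).

Section Rhombus.

Variables (A B C D : vec3) (a p q : R).
Hypotheses (HA : inH A) (HB : inH B) (HC : inH C) (HD : inH D).
Hypotheses (hAB : mink A B = - a) (hBC : mink B C = - a) (hCD : mink C D = - a)
  (hDA : mink D A = - a) (hAC : mink A C = - p) (hBD : mink B D = - q).
Hypothesis dABC : det3 A B C <> 0.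

Lemma rhombus_diagonals : p <> 1 -> q <> 1 ->
  (1 + p) * (1 + q) = 4 * a * a /\ vadd B D = vscale (2 * a / (1 + p)) (vadd A C).
Proof.
  intros Hp Hq; pose proof (cramer A B C D) as E.
  assert (Hp1 : 1 + p <> 0) by (pose proof (mink_inH_le A C HA HC); lra).
  set (d := det3 A B C) in *; set (al := det3 D B C) in *.
  set (be := det3 A D C) in *; set (ga := det3 A B D) in *.
  assert (EX : forall X, d * mink D X = al * mink A X + be * mink B X + ga * mink C X)
    by (intros X; rewrite <- mink_vscalel, E; mink_expand; ring).
  pose proof (EX A) as EA; pose proof (EX B) as EB; pose proof (EX C) as EC;
    pose proof (EX D) as ED; revert EA EB EC ED; gram; intros EA EB EC ED.
  assert (Hga : ga = al).
  { assert (Z : (p - 1) * (al - ga) = 0) by lra.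
    apply Rmult_integral in Z as [Z|Z]; lra. }
  assert (Hbe : be = - d).
  { assert (Z : (q - 1) * (be + d) = 0) by lra.
    apply Rmult_integral in Z as [Z|Z]; lra. }
  rewrite Hga, Hbe in *.
  assert (E1 : (1 + p) * al = 2 * a * d) by lra.
  assert (E2 : 2 * a * al = (1 + q) * d) by lra.
  assert (Hk : al = 2 * a / (1 + p) * d)
    by (apply (Rmult_eq_reg_l (1 + p)); [rewrite E1; field |]; exact Hp1).
  split.
  - apply (Rmult_eq_reg_r d); [|exact dABC].
    transitivity ((1 + p) * ((1 + q) * d)); [ring|].
    rewrite <- E2; transitivity (2 * a * ((1 + p) * al)); [ring|].
    rewrite E1; ring.
  - destruct (vec3_coords _ _ E) as (F0 & F1 & F2); simpl in F0, F1, F2.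
    rewrite Hk in F0, F1, F2.
    vec3_eq; apply (Rmult_eq_reg_l d); try exact dABC;
      rewrite Rmult_plus_distr_l; [rewrite F0 | rewrite F1 | rewrite F2]; ring.
Qed.

Hypotheses (dCDA : det3 C D A <> 0) (Ha : 1 < a) (Hp : 1 < p) (Hq : 1 < q).
Hypotheses (Hpq : (1 + p) * (1 + q) = 4 * a * a)
  (HBD : vadd B D = vscale (2 * a / (1 + p)) (vadd A C)).

Local Notation M1 := (side_pole a p A B C).
Local Notation M2 := (side_pole a p C D A).
Local Notation kappa := ((a * a - 1) * (p - 1) * (p + 1) * (q - 1) / 2).
Local Notation cosh_d := ((p * q - a * a) / (a * a - 1)).

Lemma rhombus_q : q = 4 * a * a / (1 + p) - 1.
Proof. field_simplify_eq; lra. Qed.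

Lemma kappa_gt0 : 0 < kappa.
Proof.
  assert (0 < (a * a - 1) * (p - 1)) by (apply Rmult_lt_0_compat; nra).
  assert (0 < (p + 1) * (q - 1)) by (apply Rmult_lt_0_compat; lra).
  nra.
Qed.

Lemma cosh_d_gt1 : 1 < cosh_d.
Proof.
  assert (E : cosh_d = 1 + (p - 1) * (q - 1) / (2 * (a * a - 1)))
    by (rewrite rhombus_q; field; split; nra).
  rewrite E; assert (0 < (p - 1) * (q - 1) / (2 * (a * a - 1))); [|lra].
  apply Rdiv_lt_0_compat; nra.
Qed.

Lemma side_poles_orth :
  mink M1 A = 0 /\ mink M1 B = 0 /\ mink M2 C = 0 /\ mink M2 D = 0.
Proof. unfold side_pole; repeat split; mink_expand; gram; ring. Qed.

Lemma side_poles_transversal : mink M1 C < 0 /\ mink M2 A < 0.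
Proof.
  assert (0 < (p - 1) * (p + 1) * (q - 1) / 2)
    by (apply Rdiv_lt_0_compat; [apply Rmult_lt_0_compat; [apply Rmult_lt_0_compat|] |]; lra).
  unfold side_pole; split; mink_expand; gram;
    replace (_ + _) with (- ((p - 1) * (p + 1) * (q - 1) / 2))
      by (rewrite rhombus_q; field; lra); lra.
Qed.

Lemma side_poles_gram :
  mink M1 M1 = kappa /\ mink M2 M2 = kappa /\ mink M1 M2 = - cosh_d * kappa.
Proof.
  unfold side_pole; repeat split; mink_expand; gram; rewrite rhombus_q; field;
    repeat split; nra.
Qed.

Lemma side_poles_vadd : vadd M1 M2 = vscale ((p - 1) * (q - 1) / 2) (vadd A C).
Proof.
  transitivity (vadd (vscale (1 - p) (vadd A C)) (vscale (a * (p - 1)) (vadd B D))).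
  - unfold side_pole; vec3_eq; ring.
  - rewrite HBD; vec3_eq; rewrite rhombus_q; field; lra.
Qed.

Lemma rhombus_common_perp_exists : exists P Q, common_perp P Q A B C D.
Proof.
  (* P0, Q0: the feet of the perpendicular up to scale; the half-turn about the centre
     exchanges them. *)
  set (k := 2 * a / (1 + p)).
  set (P0 := vadd (vscale (q - 1) A) (vscale (k * (p - 1)) B)).
  set (Q0 := vadd (vscale (q - 1) C) (vscale (k * (p - 1)) D)).
  set (r := (q - 1) ^ 2 + (k * (p - 1)) ^ 2 + 2 * a * (k * (p - 1)) * (q - 1)).
  assert (Hk : 0 < k * (p - 1)) by (apply Rmult_lt_0_compat; [apply Rdiv_lt_0_compat|]; lra).
  assert (Hr : 0 < r).
  { assert (0 < a * (k * (p - 1)) * (q - 1))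
      by (apply Rmult_lt_0_compat; [apply Rmult_lt_0_compat|]; lra).
    pose proof (pow2_ge_0 (q - 1)); pose proof (pow2_ge_0 (k * (p - 1))); unfold r; lra. }
  assert (HPP : mink P0 P0 = - r) by (unfold P0, r; mink_expand; gram; ring).
  assert (HQQ : mink Q0 Q0 = - r) by (unfold Q0, r; mink_expand; gram; ring).
  assert (HPQ : mink P0 Q0 = - cosh_d * r)
    by (unfold P0, Q0, r, k; mink_expand; gram; rewrite rhombus_q; field; repeat split; nra).
  assert (HP0 : 0 < c0 P0)
    by (unfold P0; simpl; pose proof (proj2 HA); pose proof (proj2 HB); nra).
  assert (HQ0 : 0 < c0 Q0)
    by (unfold Q0; simpl; pose proof (proj2 HC); pose proof (proj2 HD); nra).
  assert (HP : inH (hnormalize P0)) by (apply hnormalize_inH; lra).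
  assert (HQ : inH (hnormalize Q0)) by (apply hnormalize_inH; lra).
  exists (hnormalize P0), (hnormalize Q0).
  split; [exact HP|]; split; [exact HQ|]; split; [|split; [|split; [|split]]].
  - intros E; pose proof cosh_d_gt1.
    pose proof (mink_hnormalize P0 Q0 ltac:(lra) ltac:(lra)) as F.
    rewrite <- E, (proj1 HP), HPP, HPQ in F.
    replace (- cosh_d * r / - - r) with (- cosh_d) in F by (field; split; nra); lra.
  - apply on_line_hnormalize, on_line_comb.
  - apply on_line_hnormalize, on_line_comb.
  - apply hnormalize_perp_at; try lra; unfold P0, Q0, k; mink_expand; gram; rewrite rhombus_q;
      field; repeat split; nra.
  - apply hnormalize_perp_at; try lra; unfold P0, Q0, k; mink_expand; gram; rewrite rhombus_q;
      field; repeat split; nra.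
Qed.

Lemma rhombus_common_perp_center P Q X : common_perp P Q A B C D ->
  on_seg X A C -> on_seg X B D -> on_seg X P Q /\ cosh (hdist P Q) = cosh_d.
Proof.
  intros (HP & HQ & HPQ & lP & lQ & pP & pQ) HXAC HXBD.
  destruct side_poles_orth as (m1A & m1B & m2C & m2D).
  destruct side_poles_transversal as [m1C m2A].
  destruct side_poles_gram as (k1 & k2 & h).
  pose proof kappa_gt0; pose proof cosh_d_gt1.
  destruct (perp_at_pole P Q A B C M1 HP pP dABC m1A m1B ltac:(lra)) as [l E1].
  destruct (perp_at_pole Q P C D A M2 HQ pQ dCDA m2C m2D ltac:(lra)) as [l' E2].
  destruct (common_perp_poles P Q M1 M2 l l' kappa HP HQ HPQ E1 E2
    (mink_on_line A B C P M1 dABC lP m1A m1B) (mink_on_line C D A Q M2 dCDA lQ m2C m2D)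
    k1 k2 ltac:(lra) ltac:(nra)) as [-> Hg].
  assert (Hcosh : - mink P Q = cosh_d) by (apply (Rmult_eq_reg_r kappa); lra).
  split; [|rewrite cosh_hdist; assumption].
  set (t := l * ((p - 1) * (q - 1) / 2) / (1 + mink P Q)).
  assert (Hsum : vadd P Q = vscale t (vadd A C)).
  { pose proof (vadd_tang P Q) as S; rewrite E1, E2 in S.
    replace (vadd (vscale l M1) (vscale l M2)) with (vscale l (vadd M1 M2)) in S
      by (vec3_eq; ring).
    rewrite side_poles_vadd in S.
    destruct (vec3_coords _ _ S) as (S0 & S1 & S2); simpl in S0, S1, S2.
    unfold t; vec3_eq; apply (Rmult_eq_reg_l (1 + mink P Q)); try lra;
      field_simplify; lra. }
  assert (Ht : 0 < t).
  { apply (vscale_c0_pos t (vadd P Q) (vadd A C)); [| |exact Hsum]; simpl;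
      pose proof (proj2 HP); pose proof (proj2 HQ); pose proof (proj2 HA); pose proof (proj2 HC);
      lra. }
  destruct (on_seg_diagonals A B C D X _ dABC HBD HXAC HXBD) as (s & Hs & EX).
  exact (on_seg_of_vadd X P Q (vadd A C) s t Hs Ht EX Hsum).
Qed.

End Rhombus.

Lemma rhombus_cosh_angles a p q u v : 0 < a * a - 1 ->
  u * (a * a - 1) = a * a - q -> v * (a * a - 1) = a * a - p ->
  (1 + p) * (1 + q) = 4 * a * a -> (p * q - a * a) / (a * a - 1) = 1 + u + v.
Proof.
  intros Ha Hu Hv Hpq.
  assert (E : p * q - a * a = (a * a - 1) * (1 + u + v)) by lra.
  rewrite E; field; lra.
Qed.

Lemma cos_pi4_sum eps : cos (PI / 4 - eps) + cos (PI / 4 + eps) = sqrt 2 * cos eps.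
Proof.
  rewrite cos_minus, cos_plus, cos_PI4.
  assert (Hs : sqrt 2 * sqrt 2 = 2) by (apply sqrt_sqrt; lra).
  pose proof sqrt2_neq_0.
  transitivity (2 / sqrt 2 * cos eps); [field; assumption|].
  rewrite <- Hs at 1; field; assumption.
Qed.

Lemma rhombus_common_perpendiculars A B C D a p q u v :
  inH A -> inH B -> inH C -> inH D ->
  mink A B = - a -> mink B C = - a -> mink C D = - a -> mink D A = - a ->
  mink A C = - p -> mink B D = - q ->
  det3 A B C <> 0 -> det3 B C D <> 0 -> det3 C D A <> 0 -> det3 D A B <> 0 ->
  1 < a -> 1 < p -> 1 < q ->
  u * (a * a - 1) = a * a - q -> v * (a * a - 1) = a * a - p ->
  (exists P Q, common_perp P Q A B C D) /\
  (forall P Q X, common_perp P Q A B C D -> on_seg X A C -> on_seg X B D ->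
     on_seg X P Q /\ cosh (hdist P Q) = 1 + u + v) /\
  (exists P Q, common_perp P Q B C D A) /\
  (forall P Q X, common_perp P Q B C D A -> on_seg X A C -> on_seg X B D ->
     on_seg X P Q /\ cosh (hdist P Q) = 1 + u + v).
Proof.
  intros HA HB HC HD hAB hBC hCD hDA hAC hBD dABC dBCD dCDA dDAB Ha Hp Hq Hu Hv.
  assert (hCA : mink C A = - p) by (rewrite mink_sym; exact hAC).
  destruct (rhombus_diagonals A B C D a p q) as [Hpq HBD]; try assumption; try lra.
  destruct (rhombus_diagonals B C D A a q p) as [_ HCA]; try assumption; try lra.
  rewrite <- (rhombus_cosh_angles a p q u v) by (assumption || nra).
  split; [|split; [|split]].
  - apply (rhombus_common_perp_exists A B C D a p q); assumption.
  - intros P Q X HPQ; apply (rhombus_common_perp_center A B C D a p q); assumption.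
  - apply (rhombus_common_perp_exists B C D A a q p); try assumption; lra.
  - intros P Q X HPQ HXAC HXBD; rewrite (Rmult_comm p q).
    apply (rhombus_common_perp_center B C D A a q p); try assumption; [lra|].
    apply on_seg_sym; assumption.
Qed.

Theorem lemma3p2 (eps : R) (A B C D : vec3) :
  0 <= eps -> eps < PI / 4 ->
  inH A -> inH B -> inH C -> inH D ->
  convex_quad A B C D ->
  hdist A B = hdist B C -> hdist B C = hdist C D -> hdist C D = hdist D A ->
  hangle D A B = PI / 4 - eps ->
  hangle A B C = PI / 4 + eps ->
  hangle B C D = PI / 4 - eps ->
  hangle C D A = PI / 4 + eps ->
  (* common perpendicular of the opposite sides AB and CD *)
  (exists P Q : vec3, common_perp P Q A B C D) /\
  (forall P Q X : vec3, common_perp P Q A B C D ->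
     inH X -> on_seg X A C -> on_seg X B D ->
     on_seg X P Q /\ cosh (hdist P Q) = sqrt 2 * cos eps + 1) /\
  (* common perpendicular of the opposite sides BC and DA *)
  (exists P Q : vec3, common_perp P Q B C D A) /\
  (forall P Q X : vec3, common_perp P Q B C D A ->
     inH X -> on_seg X A C -> on_seg X B D ->
     on_seg X P Q /\ cosh (hdist P Q) = sqrt 2 * cos eps + 1).
Proof.
  intros He0 He1 HA HB HC HD Hconv Hab Hbc Hcd HaA HaB _ _.
  assert (Hdet : det3 A B C <> 0 /\ det3 B C D <> 0 /\ det3 C D A <> 0 /\ det3 D A B <> 0)
    by (destruct Hconv; lra).
  destruct Hdet as (dABC & dBCD & dCDA & dDAB).
  apply hdist_eq_mink in Hab, Hbc, Hcd; try assumption.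
  set (a := - mink A B) in *; set (p := - mink A C); set (q := - mink B D).
  assert (hAB : mink A B = - a) by (unfold a; ring).
  assert (hDB : mink D B = - q) by (unfold q; rewrite mink_sym; ring).
  pose proof PI_RGT_0; pose proof (mink_inH_le A B HA HB).
  destruct (cos_hangle_isosceles D A B a q (PI / 4 - eps)) as (Ha & Hq & Hu);
    try assumption; try lra.
  destruct (cos_hangle_isosceles A B C a p (PI / 4 + eps)) as (_ & Hp & Hv);
    try assumption; try lra; try (unfold p; ring).
  destruct (rhombus_common_perpendiculars A B C D a p q (cos (PI / 4 - eps))
             (cos (PI / 4 + eps))) as (Ex1 & Un1 & Ex2 & Un2);
    try eassumption; try lra; try (unfold p, q; ring); try nra.
  replace (1 + _ + _) with (sqrt 2 * cos eps + 1) in Un1, Un2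
    by (rewrite <- cos_pi4_sum; ring).
  split; [exact Ex1|]; split; [intros P Q X HPQ _; exact (Un1 P Q X HPQ)|].
  split; [exact Ex2|]; intros P Q X HPQ _; exact (Un2 P Q X HPQ).
Qed.
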